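(* Let $(\mathfrak{g},\theta)$ be a nilpotent symplectic Lie algebra over $\mathbb{R}$ and let $\nabla$ be the affine structure on $\mathfrak{g}$ defined by the symplectic cocycle $\theta$, i.e. $\nabla(X,Y)$ is the unique vector with $\theta(\nabla(X,Y),Z)=-\theta(Y,[X,Z])$ for all $Z\in\mathfrak{g}$. Let $\widetilde{\mathfrak{g}}=\mathfrak{g}\oplus\mathbb{R}$ with bracket $[(X,\alpha),(Y,\lambda)]=([X,Y],\theta(X,Y))$; this is a nilpotent contact Lie algebra with center $Z(\widetilde{\mathfrak{g}})=\{0\}\oplus\mathbb{R}$ and $\widetilde{\mathfrak{g}}/Z(\widetilde{\mathfrak{g}})\cong\mathfrak{g}$. Let $\pi:\widetilde{\mathfrak{g}}\to\mathfrak{g}$, $\pi(X,\alpha)=X$. Suppose $\widetilde{\nabla}$ is an affine structure on $\widetilde{\mathfrak{g}}$ extending $\nabla$, in the sense that $\pi(\widetilde{\nabla}((X,0),(Y,0)))=\nabla(X,Y)$ for all $X,Y\in\mathfrak{g}$. Then $\pi(\widetilde{\nabla}((X,0),T))=0$ for all $X\in\mathfrak{g}$ and all $T\in Z(\widetilde{\mathfrak{g}})$.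
   Context: A symplectic Lie algebra is a Lie algebra with a nondegenerate skew-symmetric bilinear form $\theta$ satisfying $\theta([X,Y],Z)+\theta([Y,Z],X)+\theta([Z,X],Y)=0$. An affine structure on a Lie algebra $\mathfrak{h}$ over $\mathbb{R}$ is a bilinear map $\nabla:\mathfrak{h}\times\mathfrak{h}\to\mathfrak{h}$ with $\nabla(X,Y)-\nabla(Y,X)=[X,Y]$ and $\nabla(X,\nabla(Y,Z))-\nabla(Y,\nabla(X,Z))=\nabla([X,Y],Z)$ for all $X,Y,Z\in\mathfrak{h}$; the map $\nabla$ defined from $\theta$ in the claim is such a structure. A contact Lie algebra of dimension $2p+1$ is one admitting $\omega\in\mathfrak{g}^*$ with $\omega\wedge(d\omega)^p\neq0$. *)

From mathcomp Require Import all_boot all_order all_algebra.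
From mathcomp Require Import reals.
Set Implicit Arguments. Unset Strict Implicit. Unset Printing Implicit Defensive.
Import GRing.Theory Num.Theory.
Local Open Scope ring_scope.

Definition bilinear_map (R : ringType) (V W : lmodType R) (f : V -> V -> W) : Prop :=
  (forall (a : R) x y z, f (a *: x + y) z = a *: f x z + f y z) /\
  (forall (a : R) x y z, f z (a *: x + y) = a *: f z x + f z y).

Definition bilinear_form (R : comRingType) (V : lmodType R) (f : V -> V -> R) : Prop :=
  (forall (a : R) x y z, f (a *: x + y) z = a * f x z + f y z) /\
  (forall (a : R) x y z, f z (a *: x + y) = a * f z x + f z y).

Definition is_lie_bracket (R : ringType) (V : lmodType R) (br : V -> V -> V) : Prop :=
  [/\ bilinear_map br, (forall x, br x x = 0) &
      (forall x y z, br x (br y z) + br y (br z x) + br z (br x y) = 0)].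

(* Nilpotent: C^k(g) = 0 for some k, i.e. every left-nested bracket
   [x_1,[x_2,...,[x_k,y]...]] with k brackets vanishes. *)
Definition lie_nilpotent (R : ringType) (V : lmodType R) (br : V -> V -> V) : Prop :=
  exists k : nat, forall (xs : seq V) (y : V),
    size xs = k -> foldr br y xs = 0.

Definition is_symplectic_form (R : comRingType) (V : lmodType R)
    (br : V -> V -> V) (th : V -> V -> R) : Prop :=
  [/\ bilinear_form th,
      (forall x y, th x y = - th y x),
      (forall x, (forall y, th x y = 0) -> x = 0) &
      (forall x y z, th (br x y) z + th (br y z) x + th (br z x) y = 0)].

Definition is_affine_structure (R : ringType) (V : lmodType R)
    (br : V -> V -> V) (nab : V -> V -> V) : Prop :=
  [/\ bilinear_map nab,
      (forall x y, nab x y - nab y x = br x y) &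
      (forall x y z, nab x (nab y z) - nab y (nab x z) = nab (br x y) z)].

Definition ext_bracket (R : realType) (n : nat) (br : 'rV[R]_n -> 'rV[R]_n -> 'rV[R]_n)
    (th : 'rV[R]_n -> 'rV[R]_n -> R) (p q : ('rV[R]_n * R^o)%type) : ('rV[R]_n * R^o)%type :=
  (br p.1 q.1, th p.1 q.1).

From mathcomp Require Import all_boot all_order all_algebra.
From mathcomp Require Import reals.
From mathcomp Require Import lra.
From Stdlib Require Import Classical.
Set Implicit Arguments. Unset Strict Implicit. Unset Printing Implicit Defensive.
Import GRing.Theory Num.Theory.
Local Open Scope ring_scope.

(* Let T = (0,1) span the centre and write [nabt (X,0) T = (D X, phi X)],
   [nabt (X,0) (Y,0) = (nab X Y, beta X Y)], [nabt T T = (vT, cT)]; as T is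
   central, [nabt T (X,0) = nabt (X,0) T], so these data determine [nabt].  Left symmetry on three vectors of g, together with the flatness of
   [nab], gives  beta Y Z * D X - beta X Z * D Y = th X Y * D Z.
   If dim g > 2 and (D Z)_j <> 0, some X <> 0 has (D X)_j = 0 = beta X Z, and
   the identity forces th X = 0, contradicting nondegeneracy.
   If dim g <= 2, nilpotency makes g abelian, so [nab = 0], and left symmetry on
   triples containing T gives  beta X Y * vT = phi Y * D X  and
   beta X Y * cT = beta X (D Y) + phi X * phi Y.  By cases on [phi] and [vT]
   this leaves two situations: some w <> 0 with beta _ w = 0, which kills [D]
   through the identity and torsion-freeness, or D = cT * id, which kills [th]
   unless cT = 0. *)

Section BilinearMap.
Variables (R : nzRingType) (V W : lmodType R) (f : V -> V -> W).
Hypothesis f_bilin : bilinear_map f.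

Lemma bimap0l z : f 0 z = 0.
Proof. by have := f_bilin.1 (-1) 0 0 z; rewrite scaler0 addr0 scaleN1r addNr. Qed.
Lemma bimap0r z : f z 0 = 0.
Proof. by have := f_bilin.2 (-1) 0 0 z; rewrite scaler0 addr0 scaleN1r addNr. Qed.
Lemma bimapDl x y z : f (x + y) z = f x z + f y z.
Proof. by have := f_bilin.1 1 x y z; rewrite !scale1r. Qed.
Lemma bimapDr x y z : f z (x + y) = f z x + f z y.
Proof. by have := f_bilin.2 1 x y z; rewrite !scale1r. Qed.
Lemma bimapZl a x z : f (a *: x) z = a *: f x z.
Proof. by have := f_bilin.1 a x 0 z; rewrite !addr0 bimap0l addr0. Qed.
Lemma bimapZr a x z : f z (a *: x) = a *: f z x.
Proof. by have := f_bilin.2 a x 0 z; rewrite !addr0 bimap0r addr0. Qed.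
Lemma bimapNr x z : f z (- x) = - f z x.
Proof. by rewrite -scaleN1r bimapZr scaleN1r. Qed.
Lemma bimapBl x y z : f (x - y) z = f x z - f y z.
Proof. by rewrite bimapDl -scaleN1r bimapZl scaleN1r. Qed.
End BilinearMap.

Section BilinearForm.
Variables (R : comNzRingType) (V : lmodType R) (f : V -> V -> R).
Hypothesis f_bilin : bilinear_form f.

Lemma bilinear_form_map : bilinear_map (f : V -> V -> R^o).
Proof. exact: f_bilin. Qed.

Lemma biform0l z : f 0 z = 0. Proof. exact: bimap0l bilinear_form_map z. Qed.
Lemma biform0r z : f z 0 = 0. Proof. exact: bimap0r bilinear_form_map z. Qed.
Lemma biformZr a x z : f z (a *: x) = a * f z x.
Proof. exact: bimapZr bilinear_form_map a x z. Qed.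
Lemma biformNr x z : f z (- x) = - f z x.
Proof. exact: bimapNr bilinear_form_map x z. Qed.
Lemma biformDr x y z : f z (x + y) = f z x + f z y.
Proof. exact: bimapDr bilinear_form_map x y z. Qed.
Lemma biformBl x y z : f (x - y) z = f x z - f y z.
Proof. exact: bimapBl bilinear_form_map x y z. Qed.
End BilinearForm.

Lemma skew_form_diag (R : numDomainType) (V : lmodType R) (f : V -> V -> R) :
  (forall x y, f x y = - f y x) -> forall x, f x x = 0.
Proof.
move=> f_skew x; apply/eqP; rewrite -[_ == 0]orFb -(mulrn_eq0 _ 2).
by rewrite mulr2n {1}f_skew addNr.
Qed.

Section LinearFunctional.
Variables (F : fieldType) (m : nat).

Definition linear_functional (g : 'rV[F]_m -> F) :=
  forall k x y, g (k *: x + y) = k * g x + g y.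

Lemma linear_functional_mx g : linear_functional g ->
  forall x, g x = (x *m \col_i g (delta_mx 0 i)) 0 0.
Proof.
move=> g_lin x.
have g0 : g 0 = 0 by have := g_lin (-1) 0 0; rewrite scaler0 addr0 mulN1r addNr.
have gD y z : g (y + z) = g y + g z by rewrite -[y]scale1r g_lin mul1r scale1r.
have gZ k y : g (k *: y) = k * g y by rewrite -[k *: y]addr0 g_lin g0 addr0.
rewrite {1}(row_sum_delta x) (big_morph g gD g0) mxE.
by apply: eq_bigr => i _; rewrite gZ mxE.
Qed.

Lemma linear_functionals_common_root (d a : 'rV[F]_m -> F) : (2 < m)%N ->
  linear_functional d -> linear_functional a ->
  exists2 x, x != 0 & d x = 0 /\ a x = 0.
Proof.
move=> m_gt2 d_lin a_lin.
pose M := row_mx (\col_i d (delta_mx 0 i)) (\col_i a (delta_mx 0 i)).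
have : kermx M != 0.
  rewrite kermx_eq0 /row_free; apply: contraTneq m_gt2 => <-.
  by rewrite -leqNgt (leq_trans (rank_leq_col M)).
case/rowV0Pn=> x /sub_kermxP; rewrite mul_mx_row -row_mx0 => /eq_row_mx [xd xa] x_neq0.
exists x => //.
by rewrite (linear_functional_mx d_lin) (linear_functional_mx a_lin) xd xa mxE.
Qed.
End LinearFunctional.

Section LieBracket.
Variables (R : nzRingType) (V : lmodType R) (br : V -> V -> V).
Hypotheses (br_bilin : bilinear_map br) (br_alt : forall x, br x x = 0).

Lemma lie_bracket_anti x y : br x y = - br y x.
Proof.
apply/eqP; rewrite -addr_eq0; apply/eqP.
by have := br_alt (x + y); rewrite (bimapDl br_bilin) !(bimapDr br_bilin) !br_alt add0r addr0.
Qed.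
End LieBracket.

Section SmallNilpotent.
Variable R : realFieldType.

Lemma lie_bracket_rV1_eq0 (br : 'rV[R]_1 -> 'rV[R]_1 -> 'rV[R]_1) :
  is_lie_bracket br -> forall X Y, br X Y = 0.
Proof.
case=> br_bilin br_alt _ X Y.
rewrite (mx11_scalar X) (mx11_scalar Y) -(scalemx1 _ (X 0 0)) -(scalemx1 _ (Y 0 0)).
by rewrite (bimapZl br_bilin) (bimapZr br_bilin) br_alt !scaler0.
Qed.

Lemma rV2_delta (x : 'rV[R]_2) : x = x 0 0 *: delta_mx 0 0 + x 0 1 *: delta_mx 0 1.
Proof.
apply/rowP => -[[|[|//]] ?]; rewrite !mxE /= ?mulr1 ?mulr0 ?addr0 ?add0r;
  by congr (x _ _); apply: val_inj.
Qed.

Section Dim2.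
Variable br : 'rV[R]_2 -> 'rV[R]_2 -> 'rV[R]_2.
Hypotheses (br_bilin : bilinear_map br) (br_alt : forall x, br x x = 0).
Let w := br (delta_mx 0 0) (delta_mx 0 1).

Lemma lie_bracket_rV2 X Y : br X Y = (X 0 0 * Y 0 1 - X 0 1 * Y 0 0) *: w.
Proof.
rewrite {1}(rV2_delta X) {1}(rV2_delta Y).
rewrite !(bimapDl br_bilin, bimapDr br_bilin, bimapZl br_bilin, bimapZr br_bilin) !br_alt.
rewrite [br (delta_mx 0 1) _](lie_bracket_anti br_bilin br_alt) -/w.
by rewrite !scaler0 addr0 add0r !scalerN !scalerA scalerBl [X 0 1 * _]mulrC.
Qed.

Lemma nilpotent_lie_bracket_rV2_eq0 : lie_nilpotent br -> forall X Y, br X Y = 0.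
Proof.
case=> k nilk; have [w0 X Y|w_neq0] := eqVneq w 0; first by rewrite lie_bracket_rV2 w0 scaler0.
exfalso.
pose X : 'rV[R]_2 := w 0 1 *: delta_mx 0 0 - w 0 0 *: delta_mx 0 1.
set l := w 0 0 ^+ 2 + w 0 1 ^+ 2.
have brXw : br X w = l *: w.
  by rewrite lie_bracket_rV2 /X !mxE /=; congr (_ *: _); rewrite /l; lra.
have l_neq0 : l != 0.
  apply: contraNneq w_neq0; rewrite /l => l0; rewrite (rV2_delta w).
  have [-> ->] : w 0 0 = 0 /\ w 0 1 = 0.
    by split; apply/eqP; rewrite -sqrf_eq0; apply/eqP; nra.
  by rewrite !scale0r addr0.
have iter_brX j : foldr br w (nseq j X) = l ^+ j *: w.
  elim: j => [|j IHj] /=; first by rewrite expr0 scale1r.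
  by rewrite IHj (bimapZr br_bilin) brXw scalerA exprSr.
move: (nilk (nseq k X) w (size_nseq k X)); rewrite iter_brX => /eqP.
by rewrite scaler_eq0 expf_eq0 (negbTE l_neq0) andbF (negbTE w_neq0).
Qed.
End Dim2.

Lemma nilpotent_lie_bracket_small_eq0 n (br : 'rV[R]_n -> 'rV[R]_n -> 'rV[R]_n) :
  (n <= 2)%N -> is_lie_bracket br -> lie_nilpotent br -> forall X Y, br X Y = 0.
Proof.
case: n br => [|[|[|//]]] br _ br_lie br_nil.
- by case: br_lie => br_bilin _ _ X Y; rewrite (thinmx0 X) (bimap0l br_bilin).
- exact: lie_bracket_rV1_eq0.
- by case: br_lie => br_bilin br_alt _; apply: nilpotent_lie_bracket_rV2_eq0.
Qed.
End SmallNilpotent.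

Section NondegenerateForm.
Variables (R : fieldType) (V U : lmodType R) (th : V -> V -> R).
Hypothesis th_nondeg : forall x, (forall y, th x y = 0) -> x = 0.

Lemma scale_th_eq0 (w : V) (u : U) : (forall y, th w y *: u = 0) -> w = 0 \/ u = 0.
Proof.
move=> thwu; have [|u_neq0] := eqVneq u 0; [by right | left].
apply: th_nondeg => y; apply/eqP.
by have /eqP := thwu y; rewrite scaler_eq0 (negbTE u_neq0) orbF.
Qed.
End NondegenerateForm.

Section SymplecticConnection.
Variables (R : comNzRingType) (V : lmodType R).
Variables (br : V -> V -> V) (th : V -> V -> R) (nab : V -> V -> V).
Hypotheses (br_bilin : bilinear_map br) (br_alt : forall x, br x x = 0)
  (br_jacobi : forall x y z, br x (br y z) + br y (br z x) + br z (br x y) = 0)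
  (th_bilin : bilinear_form th) (th_nondeg : forall x, (forall y, th x y = 0) -> x = 0)
  (nabE : forall X Y Z, th (nab X Y) Z = - th Y (br X Z)).

Lemma symplectic_nab_flat X Y Z : nab X (nab Y Z) - nab Y (nab X Z) = nab (br X Y) Z.
Proof.
apply/eqP; rewrite -subr_eq0; apply/eqP; apply: th_nondeg => W.
rewrite !(biformBl th_bilin) !nabE !opprK.
have jacobi : br Y (br X W) - br X (br Y W) + br (br X Y) W = 0.
  rewrite [br X W](lie_bracket_anti br_bilin br_alt) (bimapNr br_bilin).
  rewrite [br (br X Y) W](lie_bracket_anti br_bilin br_alt).
  by rewrite -oppr0 -(br_jacobi X Y W) !opprD (addrC (- br Y _)).
have := congr1 (th Z) jacobi.
by rewrite !(biformDr th_bilin) !(biformNr th_bilin) (biform0r th_bilin).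
Qed.

Lemma symplectic_nab_abelian : (forall X Y, br X Y = 0) -> forall X Y, nab X Y = 0.
Proof.
by move=> br0 X Y; apply: th_nondeg => Z; rewrite nabE br0 (biform0r th_bilin) oppr0.
Qed.
End SymplecticConnection.

Section CentralExtension.
Variables (R : realType) (n : nat).
Local Notation V := 'rV[R]_n.
Local Notation W := ('rV[R]_n * R^o)%type.
Variables (br : V -> V -> V) (th : V -> V -> R) (nab : V -> V -> V) (nabt : W -> W -> W).
Hypotheses (br_bilin : bilinear_map br) (br_alt : forall x, br x x = 0)
  (br_jacobi : forall x y z, br x (br y z) + br y (br z x) + br z (br x y) = 0)
  (th_bilin : bilinear_form th) (th_skew : forall x y, th x y = - th y x)
  (th_nondeg : forall x, (forall y, th x y = 0) -> x = 0)
  (nabE : forall X Y Z, th (nab X Y) Z = - th Y (br X Z))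
  (nabt_bilin : bilinear_map nabt)
  (nabt_torsion : forall x y, nabt x y - nabt y x = ext_bracket br th x y)
  (nabt_flat : forall x y z,
     nabt x (nabt y z) - nabt y (nabt x z) = nabt (ext_bracket br th x y) z)
  (nabt_ext : forall X Y, (nabt (X, 0) (Y, 0)).1 = nab X Y).

Local Notation lift X := ((X, 0) : W).
Local Notation T := ((0, 1) : W).

Definition D X := (nabt (lift X) T).1.
Definition phi X := (nabt (lift X) T).2.
Definition beta X Y := (nabt (lift X) (lift Y)).2.
Definition vT := (nabt T T).1.
Definition cT := (nabt T T).2.

Lemma pair_split X a : (X, a) = lift X + a *: T :> W.
Proof.
apply: injective_projections => /=; first by rewrite scaler0 addr0.
by rewrite add0r -[a%:A]/(a * 1) mulr1.
Qed.

Lemma ext_bracket_T x : ext_bracket br th T x = 0.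
Proof. by rewrite /ext_bracket /= (bimap0l br_bilin) (biform0l th_bilin). Qed.

Lemma nabt_T_lift X : nabt T (lift X) = nabt (lift X) T.
Proof. by apply/eqP; rewrite -subr_eq0 nabt_torsion ext_bracket_T. Qed.

Lemma nabt_pair X a Y b : nabt (X, a) (Y, b) =
  (nab X Y + b *: D X + a *: D Y + (a * b) *: vT,
   beta X Y + b * phi X + a * phi Y + a * b * cT).
Proof.
rewrite (pair_split X) (pair_split Y) !(bimapDl nabt_bilin, bimapDr nabt_bilin).
rewrite !(bimapZl nabt_bilin, bimapZr nabt_bilin) nabt_T_lift.
by congr pair; rewrite /= ?nabt_ext ?scalerA ?mulrA ?addrA.
Qed.

Let nab_flat := symplectic_nab_flat br_bilin br_alt br_jacobi th_bilin th_nondeg nabE.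

Lemma beta_scale_D_alt X Y Z : beta Y Z *: D X - beta X Z *: D Y = th X Y *: D Z.
Proof.
have := nabt_flat (lift X) (lift Y) (lift Z) => /(congr1 fst).
rewrite /ext_bracket /= !nabt_pair /= !(scale0r, mul0r, mulr0, addr0) -nab_flat.
by rewrite opprD addrACA; move/addrI.
Qed.

Lemma beta_torsion X Y : beta X Y - beta Y X = th X Y.
Proof. by have := nabt_torsion (lift X) (lift Y) => /(congr1 snd). Qed.

Lemma nabt_lift_central X t : (nabt (lift X) (0, t)).1 = t *: D X.
Proof.
rewrite (pair_split 0 t) (bimapDr nabt_bilin) (bimapZr nabt_bilin) -[lift 0]/(0 : W).
by rewrite (bimap0r nabt_bilin) add0r.
Qed.

Lemma lift_linear k x y : lift (k *: x + y) = k *: lift x + lift y.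
Proof. by congr pair; rewrite /= scaler0 addr0. Qed.

Lemma D0 : D 0 = 0.
Proof. by rewrite /D -[lift 0]/(0 : W) (bimap0l nabt_bilin). Qed.

Lemma phi0 : phi 0 = 0.
Proof. by rewrite /phi -[lift 0]/(0 : W) (bimap0l nabt_bilin). Qed.

Lemma beta0l Y : beta 0 Y = 0.
Proof. by rewrite /beta -[lift 0]/(0 : W) (bimap0l nabt_bilin). Qed.

Lemma beta0r X : beta X 0 = 0.
Proof. by rewrite /beta -[lift 0]/(0 : W) (bimap0r nabt_bilin). Qed.

Lemma D_coord_linear j : linear_functional (fun x => D x 0 j).
Proof.
by move=> k x y; rewrite /D lift_linear (bimapDl nabt_bilin) (bimapZl nabt_bilin) !mxE.
Qed.

Lemma beta_linear_l Z : linear_functional (beta ^~ Z).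
Proof.
by move=> k x y; rewrite /beta lift_linear (bimapDl nabt_bilin) (bimapZl nabt_bilin).
Qed.

Lemma beta_linear_r X : linear_functional (beta X).
Proof.
by move=> k x y; rewrite /beta lift_linear (bimapDr nabt_bilin) (bimapZr nabt_bilin).
Qed.

Lemma D_eq0_of_beta_eq0 Z : (forall X, beta X Z = 0) -> D Z = 0.
Proof.
move=> betaZ; have thDZ X Y : th X Y *: D Z = 0.
  by rewrite -beta_scale_D_alt !betaZ !scale0r subr0.
by case: (scale_th_eq0 th_nondeg (thDZ (D Z))).
Qed.

Lemma D_eq0_dim_gt2 : (2 < n)%N -> forall Z, D Z = 0.
Proof.
move=> n_gt2 Z; apply/rowP => j; rewrite mxE; apply/eqP/negP => /negP DZj.
have [x x_neq0 [Dxj betaxZ]] :=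
  linear_functionals_common_root n_gt2 (D_coord_linear j) (beta_linear_l Z).
move/eqP: x_neq0; apply; apply: th_nondeg => y.
have := congr1 (fun u : V => u 0 j) (beta_scale_D_alt x y Z); rewrite !mxE /= Dxj betaxZ.
by rewrite mulr0 mul0r subr0 => /esym/eqP; rewrite mulf_eq0 (negbTE DZj) orbF => /eqP.
Qed.

Lemma D_eq0_of_isotropic w : w != 0 -> (forall X, beta X w = 0) -> forall Y, D Y = 0.
Proof.
move=> w_neq0 w_iso Y.
have Dw : D w = 0 := D_eq0_of_beta_eq0 w_iso.
have key Y' Z : th w Z *: D Y' = - (th w Y' *: D Z).
  by rewrite -(beta_scale_D_alt w Y' Z) Dw scaler0 sub0r opprK -beta_torsion w_iso subr0.
have diag Z : th w Z *: D Z = 0.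
  have /eqP := key Z Z; rewrite -addr_eq0 -mulr2n -scaler_nat scaler_eq0 pnatr_eq0 /=.
  by move/eqP.
have thwDY Z : th w Z *: D Y = 0.
  have /eqP : th w Z *: (th w Z *: D Y) = 0.
    by rewrite key scalerN scalerA mulrC -scalerA diag scaler0 oppr0.
  by rewrite scaler_eq0 => /orP[/eqP->|/eqP //]; rewrite scale0r.
by case: (scale_th_eq0 th_nondeg thwDY) => // w0; rewrite w0 eqxx in w_neq0.
Qed.

Lemma D_eq0_of_scalar : (forall Y, D Y = cT *: Y) -> forall Z, D Z = 0.
Proof.
move=> Dc; have [c0 Z|c_neq0] := eqVneq cT 0; first by rewrite Dc c0 scale0r.
suff V0 (X : V) : X = 0 by move=> Z; rewrite Dc (V0 Z) scaler0.
apply: th_nondeg => Y; set s := th X Y.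
have th_diag := skew_form_diag th_skew.
have e1 : cT * s * (beta Y X - s) = 0.
  have := congr1 (th Y) (beta_scale_D_alt X Y X); rewrite !Dc.
  rewrite !(biformDr th_bilin, biformNr th_bilin, biformZr th_bilin).
  by rewrite !th_diag [th Y X]th_skew -/s => e; lra.
have e2 : cT * s * (beta X Y + s) = 0.
  have := congr1 (th X) (beta_scale_D_alt X Y Y); rewrite !Dc.
  rewrite !(biformDr th_bilin, biformNr th_bilin, biformZr th_bilin).
  by rewrite !th_diag -/s => e; lra.
have betaXY : beta X Y = s + beta Y X by rewrite /s -beta_torsion subrK.
have : cT * (s * s) = 0 by rewrite betaXY in e2; lra.
by move/eqP; rewrite mulf_eq0 (negbTE c_neq0) mulf_eq0 orbb => /eqP.
Qed.

Section Abelian.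
Hypothesis br0 : forall X Y, br X Y = 0.
Let nab0 := symplectic_nab_abelian th_bilin th_nondeg nabE br0.

Let simpl0 := (nab0, D0, phi0, beta0l, beta0r, scale0r, scale1r, scaler0,
  mul0r, mul1r, mulr0, mulr1, addr0, add0r).

Lemma beta_scale_vT X Y : beta X Y *: vT = phi Y *: D X.
Proof.
have := nabt_flat T (lift X) (lift Y) => /(congr1 fst).
rewrite ext_bracket_T (bimap0l nabt_bilin) !nabt_pair /= !simpl0.
by move/eqP; rewrite subr_eq0 => /eqP.
Qed.

Lemma beta_mul_cT X Y : beta X Y * cT = beta X (D Y) + phi Y * phi X.
Proof.
have := nabt_flat T (lift X) (lift Y) => /(congr1 snd).
rewrite ext_bracket_T (bimap0l nabt_bilin) !nabt_pair /= !simpl0.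
by move/eqP; rewrite subr_eq0 => /eqP.
Qed.

Lemma D_eq0_of_phi_neq0 Z : phi Z != 0 -> D Z = 0.
Proof.
move=> phiZ; have thDZ X Y : th X Y *: D Z = 0.
  have /eqP : phi Z *: (th X Y *: D Z) = 0.
    rewrite -beta_scale_D_alt scalerBr !scalerA ![phi Z * _]mulrC -!scalerA -!beta_scale_vT.
    by rewrite !scalerA mulrC subrr.
  by rewrite scaler_eq0 (negbTE phiZ) => /eqP.
by case: (scale_th_eq0 th_nondeg (thDZ (D Z))).
Qed.

Lemma D_eq0_of_phi_eq0 : (forall Y, phi Y = 0) -> forall Z, D Z = 0.
Proof.
move=> phi_eq0.
case: (classic (forall Y, D Y = cT *: Y)) => [|/not_all_ex_not [Y DY]].
  exact: D_eq0_of_scalar.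
apply: (@D_eq0_of_isotropic (D Y - cT *: Y)) => [|X]; first by rewrite subr_eq0; apply/eqP.
have betaXDY : beta X (D Y) = beta X Y * cT by rewrite beta_mul_cT !phi_eq0 mulr0 addr0.
by rewrite addrC -scaleNr beta_linear_r betaXDY mulNr mulrC addNr.
Qed.

Lemma D_eq0_abelian Z : D Z = 0.
Proof.
have [phiZ|] := eqVneq (phi Z) 0; last exact: D_eq0_of_phi_neq0.
have [vT0|vT_neq0] := eqVneq vT 0.
  have [//|DZ] := eqVneq (D Z) 0; apply: D_eq0_of_phi_eq0 => Y.
  have /eqP := beta_scale_vT Z Y; rewrite vT0 scaler0 eq_sym scaler_eq0 (negbTE DZ) orbF.
  by move/eqP.
apply: D_eq0_of_beta_eq0 => X.
have /eqP := beta_scale_vT X Z; rewrite phiZ scale0r scaler_eq0 (negbTE vT_neq0) orbF.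
by move/eqP.
Qed.

End Abelian.

End CentralExtension.

Unset Implicit Arguments.

Theorem mainTheorem4 (R : realType) (n : nat)
    (br : 'rV[R]_n -> 'rV[R]_n -> 'rV[R]_n) (th : 'rV[R]_n -> 'rV[R]_n -> R)
    (nab : 'rV[R]_n -> 'rV[R]_n -> 'rV[R]_n)
    (nabt : ('rV[R]_n * R^o)%type -> ('rV[R]_n * R^o)%type -> ('rV[R]_n * R^o)%type) :
  is_lie_bracket br ->
  lie_nilpotent br ->
  is_symplectic_form br th ->
  (forall X Y Z, th (nab X Y) Z = - th Y (br X Z)) ->
  is_affine_structure (ext_bracket br th) nabt ->
  (forall X Y, (nabt (X, 0) (Y, 0)).1 = nab X Y) ->
  forall (X : 'rV[R]_n) (t : R), (nabt (X, 0) (0, t)).1 = 0.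
Proof.
move=> br_lie br_nil [th_bilin th_skew th_nondeg _] nabE.
move=> [nabt_bilin nabt_torsion nabt_flat] nabt_ext X t.
have [br_bilin br_alt br_jacobi] := br_lie.
have D_eq0 Z : D nabt Z = 0.
  have [n_le2|n_gt2] := leqP n 2.
    by apply: (D_eq0_abelian (br := br) (th := th) (nab := nab)) => //;
      apply: nilpotent_lie_bracket_small_eq0.
  exact: (D_eq0_dim_gt2 (br := br) (th := th) (nab := nab)).
by rewrite nabt_lift_central // D_eq0 scaler0.
Qed.
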